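(* Let $\Lambda$ be a left cancellative small category with no nontrivial invertible morphisms (i.e. every invertible morphism is an identity). Then the equivalence relations $\sim_1$ and $\sim_2$ on $\mathcal Z*X$ coincide; consequently $G_1(\Lambda)=G_2(\Lambda)$.
   Context: A left cancellative small category (LCSC) is a small category $\Lambda$ such that $\alpha\beta=\alpha\gamma$ implies $\beta=\gamma$. Morphisms are composed as $\alpha\beta$ when $s(\alpha)=r(\beta)$; $\Lambda^0$ is the set of objects, identified with identity morphisms; $v\Lambda=\{\alpha:r(\alpha)=v\}$; $\alpha\Lambda=\{\alpha\beta:r(\beta)=s(\alpha)\}$. For $\alpha\in\Lambda$, $\tau^\alpha:s(\alpha)\Lambda\to r(\alpha)\Lambda$, $\tau^\alpha(\beta)=\alpha\beta$, and $\sigma^\alpha:\alpha\Lambda\to s(\alpha)\Lambda$ is its inverse. A zigzag is a tuple $\zeta=(\alpha_1,\beta_1,\dots,\alpha_n,\beta_n)$ in $\Lambda$ with $r(\alpha_i)=r(\beta_i)$ for all $i$ and $s(\alpha_{i+1})=s(\beta_i)$ for $i<n$; $\mathcal Z$ is the set of zigzags, $s(\zeta)=s(\beta_n)$, $r(\zeta)=s(\alpha_1)$, $\mathcal Zv=\{\zeta:s(\zeta)=v\}$, $\overline\zeta=(\beta_n,\alpha_n,\dots,\beta_1,\alpha_1)$, and composable zigzags are concatenated as tuples. The zigzag map is the partial injective map $\varphi_\zeta=\sigma^{\alpha_1}\circ\tau^{\beta_1}\circ\cdots\circ\sigma^{\alpha_n}\circ\tau^{\beta_n}$ with domain $A(\zeta)\subseteq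 s(\zeta)\Lambda$ and range $A(\overline\zeta)$. For $v\in\Lambda^0$, $\mathcal D^{(0)}_v$ is the set of nonempty sets $A(\zeta)$, $\zeta\in\mathcal Zv$, and $\mathcal A_v$ is the ring of subsets of $v\Lambda$ generated by $\mathcal D^{(0)}_v$. $X_v$ is the set of ultrafilters in the ring $\mathcal A_v$ (a filter: nonempty family of nonempty members of $\mathcal A_v$ closed under intersections and supersets in $\mathcal A_v$; ultrafilter: maximal filter), with $\mathcal U_x$ denoting the ultrafilter $x$, topologized by the compact open basic sets $\widehat E=\{x\in X_v:E\in\mathcal U_x\}$, $E\in\mathcal A_v$; $X=\bigsqcup_vX_v$ and $r(x)=v$ for $x\in X_v$. For $\zeta\in\mathcal Z$ and $x\in\widehat{A(\zeta)}$, $\{\varphi_\zeta(E\cap A(\zeta)):E\in\mathcal U_x\}$ is a base for a unique ultrafilter of $\mathcal A_{r(\zeta)}$, denoted $\Phi_\zeta(x)$; $\Phi_\zeta:\widehat{A(\zeta)}\to\widehat{A(\overline\zeta)}$ is a homeomorphism. Let $\mathcal Z*X=\{(\zeta,x):s(\zeta)=r(x),\ x\in\widehat{A(\zeta)}\}$. Define $(\zeta,x)\sim_1(\zeta',x')$ iff $x=x'$ and $\Phi_\zeta|_{\widehat E}=\Phi_{\zeta'}|_{\widehat E}$ for some $E\in\mathcal U_x$; and $(\zeta,x)\sim_2(\zeta',x')$ iff $x=x'$ and $\varphi_\zeta|_E=\varphi_{\zeta'}|_E$ for some $E\in\mathcal U_x$. $G_i(\Lambda)=(\mathcal Z*X)/\sim_i$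 ($i=1,2$), with product $[\zeta,\Phi_{\zeta'}(x)][\zeta',x]=[\zeta\zeta',x]$ and inverse $[\zeta,x]^{-1}=[\overline\zeta,\Phi_\zeta(x)]$. *)

(* Sets of morphisms are predicates Mor -> Prop;
   families of sets (filters, rings) are predicates on such predicates. *)
From Stdlib Require Import List.
Import ListNotations.
Set Implicit Arguments.

(** A small category: composition [comp a b] = "a b" (first b, then a),
    meaningful when [src a = rng b]. *)
Record Cat := {
  Obj : Type;
  Mor : Type;
  src : Mor -> Obj;
  rng : Mor -> Obj;
  idm : Obj -> Mor;
  comp : Mor -> Mor -> Mor;
  src_id : forall v, src (idm v) = v;
  rng_id : forall v, rng (idm v) = v;
  src_comp : forall a b, src a = rng b -> src (comp a b) = src b;
  rng_comp : forall a b, src a = rng b -> rng (comp a b) = rng a;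
  comp_id_l : forall a, comp (idm (rng a)) a = a;
  comp_id_r : forall a, comp a (idm (src a)) = a;
  comp_assoc : forall a b c, src a = rng b -> src b = rng c ->
      comp a (comp b c) = comp (comp a b) c
}.

Section Defs.
Variable C : Cat.
Notation M := (Mor C).

Definition left_cancellative : Prop :=
  forall a b c, src C a = rng C b -> src C a = rng C c ->
    comp C a b = comp C a c -> b = c.

Definition invertible (a : M) : Prop :=
  exists b, src C a = rng C b /\ src C b = rng C a /\
    comp C a b = idm C (rng C a) /\ comp C b a = idm C (src C a).

Definition no_nontrivial_invertibles : Prop :=
  forall a, invertible a -> a = idm C (rng C a).

(** A zigzag (a1,b1,...,an,bn), n >= 1, stored as first pair + rest. *)
Definition zz := ((M * M) * list (M * M))%type.
Definition zlist (z : zz) : list (M * M) := fst z :: snd z.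

Fixpoint zz_ok_list (l : list (M * M)) : Prop :=
  match l with
  | [] => True
  | (a, b) :: rest =>
      rng C a = rng C b /\
      match rest with
      | [] => True
      | (a', _) :: _ => src C a' = src C b
      end /\ zz_ok_list rest
  end.

Definition is_zigzag (z : zz) : Prop := zz_ok_list (zlist z).

(** s(zeta) = s(b_n), r(zeta) = s(a_1) *)
Definition zsrc (z : zz) : Obj C := src C (snd (last (zlist z) (fst z))).
Definition zrng (z : zz) : Obj C := src C (fst (fst z)).

(** graph of sigma^a o tau^b : y |-> z with a z = b y *)
Definition step (a b y w : M) : Prop :=
  rng C y = src C b /\ rng C w = src C a /\ comp C b y = comp C a w.

(** graph of sigma^{a1} o tau^{b1} o ... o sigma^{an} o tau^{bn} *)
Fixpoint zgraph_list (l : list (M * M)) (x w : M) : Prop :=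
  match l with
  | [] => x = w
  | (a, b) :: rest => exists y, zgraph_list rest x y /\ step a b y w
  end.

Definition zgraph (z : zz) : M -> M -> Prop := zgraph_list (zlist z).

Definition Adom (z : zz) : M -> Prop := fun x => exists w, zgraph z x w.

Definition family := (M -> Prop) -> Prop.

(** rings of sets (closed under extensional equality) *)
Definition is_ring (R : family) : Prop :=
  R (fun _ => False) /\
  (forall E F, R E -> R F -> R (fun x => E x \/ F x)) /\
  (forall E F, R E -> R F -> R (fun x => E x /\ ~ F x)) /\
  (forall E F, R E -> (forall x, E x <-> F x) -> R F).

(** A_v : the ring generated by D^(0)_v *)
Definition A_ring (v : Obj C) : family := fun E =>
  forall R : family, is_ring R ->
    (forall z, is_zigzag z -> zsrc z = v -> (exists x, Adom z x) -> R (Adom z)) ->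
    R E.

Definition is_filter (v : Obj C) (F : family) : Prop :=
  (exists E, F E) /\
  (forall E, F E -> A_ring v E /\ exists x, E x) /\
  (forall E E', F E -> F E' -> F (fun x => E x /\ E' x)) /\
  (forall E E', F E -> A_ring v E' -> (forall x, E x -> E' x) -> F E').

Definition is_ultrafilter (v : Obj C) (U : family) : Prop :=
  is_filter v U /\
  forall F, is_filter v F -> (forall E, U E -> F E) -> forall E, F E -> U E.

(** Phi_zeta(x): the filter of A_{r(zeta)} with base
    { phi_zeta(E cap A(zeta)) : E in U_x } *)
Definition Phi (z : zz) (U : family) : family := fun F =>
  A_ring (zrng z) F /\
  exists E, U E /\ forall y, (exists x, E x /\ Adom z x /\ zgraph z x y) -> F y.

(** (zeta, x) in Z * X, with x the ultrafilter U of A_v *)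
Definition in_ZX (z : zz) (v : Obj C) (U : family) : Prop :=
  is_zigzag z /\ zsrc z = v /\ is_ultrafilter v U /\ U (Adom z).

Definition same_point (v : Obj C) (U : family) (v' : Obj C) (U' : family) : Prop :=
  v = v' /\ forall E, U E <-> U' E.

(** ~1 : Phi_zeta and Phi_zeta' agree (as partial maps) on \hat E *)
Definition sim1 (z : zz) (v : Obj C) (U : family)
                (z' : zz) (v' : Obj C) (U' : family) : Prop :=
  same_point v U v' U' /\
  exists E, U E /\
    forall W, is_ultrafilter v W -> W E ->
      (W (Adom z) <-> W (Adom z')) /\
      (W (Adom z) -> forall F, Phi z W F <-> Phi z' W F).

Definition sim2 (z : zz) (v : Obj C) (U : family)
                (z' : zz) (v' : Obj C) (U' : family) : Prop :=
  same_point v U v' U' /\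
  exists E, U E /\
    forall x y, E x -> (zgraph z x y <-> zgraph z' x y).

End Defs.

(* For x in A(zeta) ∩ A(zeta'), the images b = phi_zeta(x) and b' = phi_zeta'(x) determine
   the germs: by left cancellation phi_zeta(xg) = bg near x. If Phi_zeta and Phi_zeta' agree
   on the ultrafilters near x and b were not in b'Λ, an ultrafilter through xΛ on which
   "bg ∉ b'Λ" holds would be sent by Phi_zeta into bΛ \ b'Λ and by Phi_zeta' outside it.
   Hence b ∈ b'Λ and symmetrically b' ∈ bΛ; then b = b'h, b' = bk with hk, kh identities,
   so k is invertible, hence trivial, and phi_zeta, phi_zeta' agree near x. The converse
   direction is immediate, since Phi_zeta(W) only depends on phi_zeta on a member of W. *)

From Stdlib Require Import List Classical.
Import ListNotations.
From mathcomp Require classical_sets.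

Section ZigzagGerms.
Context {C : Cat}.

Lemma A_ring_ext v (E F : Mor C -> Prop) :
  A_ring C v E -> (forall x, E x <-> F x) -> A_ring C v F.
Proof.
  intros HE HEF R HR Hgen. apply (proj2 (proj2 (proj2 HR)) E); [exact (HE R HR Hgen)|exact HEF].
Qed.

Lemma A_ring_diff v (E F : Mor C -> Prop) :
  A_ring C v E -> A_ring C v F -> A_ring C v (fun x => E x /\ ~ F x).
Proof.
  intros HE HF R HR Hgen. apply (proj1 (proj2 (proj2 HR))); [exact (HE R HR Hgen)|exact (HF R HR Hgen)].
Qed.

Lemma A_ring_inter v (E F : Mor C -> Prop) :
  A_ring C v E -> A_ring C v F -> A_ring C v (fun x => E x /\ F x).
Proof.
  intros HE HF. apply A_ring_ext with (E := fun x => E x /\ ~ (E x /\ ~ F x)).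
  - apply A_ring_diff; [|apply A_ring_diff]; assumption.
  - intros x. destruct (classic (F x)); tauto.
Qed.

Lemma A_ring_Adom v (z : zz C) : is_zigzag z -> zsrc z = v -> A_ring C v (Adom z).
Proof.
  intros Hz Hzs R HR Hgen.
  destruct (classic (exists x, Adom z x)) as [Hne|Hempty]; [apply Hgen; auto|].
  apply (proj2 (proj2 (proj2 HR)) (fun _ => False)); [apply HR|].
  intros x; split; [intros []|intros Hx; apply Hempty; exists x; exact Hx].
Qed.

Section Filters.
Context {v : Obj C} {W : family C}.
Hypothesis HW : is_filter v W.

Lemma filter_ring {E} : W E -> A_ring C v E.
Proof. intros HE. apply (proj1 (proj2 HW) E HE). Qed.

Lemma filter_nonempty {E} : W E -> exists x, E x.
Proof. intros HE. apply (proj1 (proj2 HW) E HE). Qed.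

Lemma filter_inter {E F} : W E -> W F -> W (fun x => E x /\ F x).
Proof. apply HW. Qed.

Lemma filter_up {E F} : W E -> A_ring C v F -> (forall x, E x -> F x) -> W F.
Proof. apply HW. Qed.

End Filters.

Definition principal_filter v (F0 : Mor C -> Prop) : family C :=
  fun E => A_ring C v E /\ forall x, F0 x -> E x.

Lemma principal_filter_is_filter v (F0 : Mor C -> Prop) :
  A_ring C v F0 -> (exists x, F0 x) -> is_filter v (principal_filter v F0).
Proof.
  intros HF0 [x0 Hx0]. split; [|split; [|split]].
  - exists F0; split; auto.
  - intros E [HE HF0E]. split; [exact HE|exists x0; auto].
  - intros E E' [HE HF0E] [HE' HF0E']. split; [apply A_ring_inter|]; auto.
  - intros E E' [HE HF0E] HE' HEE'. split; auto.
Qed.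

Definition family_union (Ws : family C -> Prop) : family C :=
  fun E => exists2 W, Ws W & W E.

Lemma filter_chain_union {v} {F0 : Mor C -> Prop} {Ws : family C -> Prop} :
  (forall W, Ws W -> (exists E, W E) -> is_filter v W /\ W F0) ->
  (forall W W', Ws W -> Ws W' -> (forall E, W E -> W' E) \/ (forall E, W' E -> W E)) ->
  (exists E, family_union Ws E) ->
  is_filter v (family_union Ws) /\ family_union Ws F0.
Proof.
  intros Hfil Htot [E0 [W0 HW0 HW0E0]].
  assert (Hmem : forall W E, Ws W -> W E -> is_filter v W)
    by (intros W E HWs HE; apply (Hfil W HWs); exists E; exact HE).
  split; [split; [|split; [|split]]|].
  - exists E0, W0; assumption.
  - intros E [W HWs HE]. split; [eapply filter_ring|eapply filter_nonempty]; eauto.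
  - intros E E' [W HWs HE] [W' HWs' HE'].
    destruct (Htot W W' HWs HWs') as [Hsub|Hsub].
    + exists W'; [|apply (filter_inter (Hmem W' E' HWs' HE'))]; auto.
    + exists W; [|apply (filter_inter (Hmem W E HWs HE))]; auto.
  - intros E E' [W HWs HE] HE' HEE'.
    exists W; [|apply (filter_up (Hmem W E HWs HE) HE)]; auto.
  - exists W0; [exact HW0|]. apply (Hfil W0 HW0). exists E0; exact HW0E0.
Qed.

Lemma ultrafilter_exists {v} {F0 : Mor C -> Prop} :
  A_ring C v F0 -> (exists x, F0 x) -> exists W, is_ultrafilter v W /\ W F0.
Proof.
  intros HF0 HF0ne.
  (* the empty family is admitted so that empty chains have an upper bound *)
  pose (P := fun W : family C => (exists E, W E) -> is_filter v W /\ W F0).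
  destruct (@classical_sets.Zorn_bigcup _ P) as [W [HPW Wmax]].
  - intros Ws HWs Htot. exact (filter_chain_union HWs Htot).
  - assert (HWne : exists E, W E).
    { apply NNPP; intros Hempty. apply (Wmax (principal_filter v F0)).
      - split; [intros E HE; exfalso; eauto|].
        intros Hsub. apply Hempty. exists F0. apply Hsub. split; auto.
      - intros _. split; [apply principal_filter_is_filter; auto|split; auto]. }
    destruct (HPW HWne) as [HWfil HWF0].
    exists W. split; [split; [exact HWfil|]|exact HWF0].
    intros F HF HWF E HFE. apply NNPP; intros HnWE.
    apply (Wmax F); [split; [exact HWF|intros Hsub; exact (HnWE (Hsub E HFE))]|].
    intros _. split; auto.
Qed.

Lemma zgraph_list_src {l} {x y : Mor C} : zgraph_list C l x y -> src C x = src C y.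
Proof.
  revert y; induction l as [|[a b] l IH]; simpl; intros y H.
  - subst; reflexivity.
  - destruct H as [y0 [H0 [Hy0 [Hy Hab]]]].
    rewrite (IH _ H0), <- (src_comp C b y0), Hab by auto. apply src_comp; auto.
Qed.

Lemma zgraph_list_comp_r {l} {x y g : Mor C} :
  zgraph_list C l x y -> rng C g = src C x -> zgraph_list C l (comp C x g) (comp C y g).
Proof.
  revert y; induction l as [|[a b] l IH]; simpl; intros y H Hg.
  - subst; reflexivity.
  - destruct H as [y0 [H0 [Hy0 [Hy Hab]]]].
    assert (Hsy0 : src C x = src C y0) by exact (zgraph_list_src H0).
    assert (Hsy : src C y = src C y0)
      by (rewrite <- (src_comp C b y0), Hab by auto; symmetry; apply src_comp; auto).
    exists (comp C y0 g). split; [apply IH; auto|split; [|split]].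
    + rewrite rng_comp; congruence.
    + rewrite rng_comp; congruence.
    + rewrite comp_assoc, Hab, <- comp_assoc; auto; congruence.
Qed.

Lemma zgraph_rng (z : zz C) (x y : Mor C) : zgraph z x y -> rng C y = zrng z.
Proof. destruct z as [[a b] l]. intros [y0 [_ [_ [H _]]]]. exact H. Qed.

Lemma zgraph_list_dom l d (x y : Mor C) :
  l <> [] -> zgraph_list C l x y -> rng C x = src C (snd (last l d)).
Proof.
  revert y; induction l as [|[a b] l IH]; simpl; intros y Hl H; [congruence|].
  destruct H as [y0 [H0 [Hy0 _]]].
  destruct l as [|p l]; [simpl in H0; subst; exact Hy0|].
  apply (IH y0); [congruence|exact H0].
Qed.

Lemma zgraph_dom (z : zz C) (x y : Mor C) : zgraph z x y -> rng C x = zsrc z.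
Proof. apply zgraph_list_dom. unfold zlist; congruence. Qed.

Definition principal_zz (b : Mor C) : zz C := ((b, idm C (rng C b)), []).

Lemma principal_zz_zigzag b : is_zigzag (principal_zz b) /\ zsrc (principal_zz b) = rng C b.
Proof. unfold is_zigzag, zsrc, principal_zz, zlist; simpl. rewrite rng_id, src_id. auto. Qed.

Lemma Adom_principal_zz b y :
  Adom (principal_zz b) y <-> exists w, rng C w = src C b /\ y = comp C b w.
Proof.
  unfold Adom, zgraph, principal_zz, zlist; simpl. split.
  - intros [w [y0 [-> [Hy [Hw Hbw]]]]]. exists w. rewrite src_id in Hy.
    rewrite <- Hy, comp_id_l in Hbw. auto.
  - intros [w [Hw ->]]. assert (Hr : rng C (comp C b w) = rng C b) by (apply rng_comp; auto).
    exists w, (comp C b w). split; [reflexivity|split; [|split]]; auto.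
    + rewrite src_id; exact Hr.
    + rewrite <- Hr at 1. apply comp_id_l.
Qed.

(* phi = sigma^{b'} tau^b sigma^a tau^{r(a)}, whose domain is {ag : bg ∈ b'Λ} *)
Definition factor_zz (b' b a : Mor C) : zz C := ((b', b), [(a, idm C (rng C a))]).

Lemma factor_zz_zigzag b' b a : rng C b' = rng C b -> src C a = src C b ->
  is_zigzag (factor_zz b' b a) /\ zsrc (factor_zz b' b a) = rng C a.
Proof.
  intros Hr Hs. unfold is_zigzag, zsrc, factor_zz, zlist; simpl.
  rewrite rng_id, src_id. repeat split; congruence.
Qed.

Lemma Adom_factor_zz b' b a x : src C a = src C b ->
  Adom (factor_zz b' b a) x <-> exists g h, rng C g = src C a /\ x = comp C a g /\
     rng C h = src C b' /\ comp C b g = comp C b' h.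
Proof.
  intros Hs. unfold Adom, zgraph, factor_zz, zlist; simpl. split.
  - intros [h [g [[y0 [-> [Hy [Hg Hag]]]] [Hg' [Hh Hbg]]]]].
    exists g, h. rewrite src_id in Hy. rewrite <- Hy, comp_id_l in Hag. auto.
  - intros [g [h [Hg [-> [Hh Hbg]]]]].
    assert (Hr : rng C (comp C a g) = rng C a) by (apply rng_comp; auto).
    exists h, g. split; [|split; [congruence|split]]; auto.
    exists (comp C a g). split; [reflexivity|split; [|split]]; auto.
    + rewrite src_id; exact Hr.
    + rewrite <- Hr at 1. apply comp_id_l.
Qed.

Section LeftCancellative.
Hypothesis Hlc : left_cancellative C.

Lemma zgraph_list_functional {l} {x y y' : Mor C} :
  zgraph_list C l x y -> zgraph_list C l x y' -> y = y'.
Proof.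
  revert y y'; induction l as [|[a b] l IH]; simpl; intros y y' H H'; [congruence|].
  destruct H as [y0 [H0 [Hy0 [Hy Hab]]]], H' as [y0' [H0' [_ [Hy' Hab']]]].
  rewrite <- (IH _ _ H0 H0') in Hab'. apply (Hlc a); congruence.
Qed.

Lemma A_ring_not_factor v (b' b a : Mor C) :
  rng C a = v -> src C a = src C b -> rng C b' = rng C b ->
  A_ring C v (fun x => exists g, rng C g = src C a /\ x = comp C a g /\
                 ~ exists h, rng C h = src C b' /\ comp C b g = comp C b' h).
Proof.
  intros Hv Hs Hr. destruct (principal_zz_zigzag a) as [Za Zas].
  destruct (factor_zz_zigzag b' b a Hr Hs) as [Zf Zfs].
  apply A_ring_ext with (E := fun x => Adom (principal_zz a) x /\ ~ Adom (factor_zz b' b a) x).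
  { apply A_ring_diff; apply A_ring_Adom; congruence. }
  intros x. rewrite Adom_principal_zz, Adom_factor_zz by exact Hs. split.
  - intros [[g [Hg ->]] Hnf]. exists g. split; [exact Hg|split; [reflexivity|]].
    intros [h Hh]. apply Hnf. exists g, h. tauto.
  - intros [g [Hg [-> Hnf]]]. split; [exists g; auto|].
    intros [g' [h [Hg' [Hag [Hh Hbg]]]]].
    apply (Hlc a) in Hag; [subst g'|congruence|congruence].
    apply Hnf. exists h; auto.
Qed.

(* Every member of W meets F0 ⊆ xΛ, and phi_zb sends xg to b'g, which lies outside F. *)
Lemma Phi_separated {v} {za zb : zz C} {W : family C} {F0 F : Mor C -> Prop} {x b b' : Mor C} :
  is_filter v W -> W F0 ->
  (forall y, F0 y -> exists g, rng C g = src C x /\ y = comp C x g) ->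
  zgraph za x b -> zgraph zb x b' -> A_ring C (zrng za) F ->
  (forall g, rng C g = src C x -> F0 (comp C x g) -> F (comp C b g) /\ ~ F (comp C b' g)) ->
  Phi za W F /\ ~ Phi zb W F.
Proof.
  intros HW HWF0 HF0x Hb Hb' HF Hsep. split.
  - split; [exact HF|]. exists F0. split; [exact HWF0|].
    intros y [y0 [Hy0 [_ Hy0y]]]. destruct (HF0x y0 Hy0) as [g [Hg ->]].
    rewrite (zgraph_list_functional Hy0y (zgraph_list_comp_r Hb Hg)).
    apply Hsep; auto.
  - intros [_ [E2 [HWE2 HE2F]]].
    destruct (filter_nonempty HW (filter_inter HW HWE2 HWF0)) as [y [HE2y HF0y]].
    destruct (HF0x y HF0y) as [g [Hg ->]].
    apply (Hsep g Hg HF0y), HE2F. exists (comp C x g).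
    pose proof (zgraph_list_comp_r Hb' Hg) as Hxg.
    split; [exact HE2y|split; [exists (comp C b' g)|]]; exact Hxg.
Qed.

Lemma Phi_incl_not_separated {v} {za zb : zz C} {E1 : Mor C -> Prop} {x b b' : Mor C} :
  is_zigzag za -> zsrc za = v -> A_ring C v E1 -> zgraph za x b -> zgraph zb x b' ->
  (forall W, is_ultrafilter v W -> W E1 -> W (Adom za) ->
     forall G, Phi za W G -> Phi zb W G) ->
  forall F0 F, A_ring C v F0 -> F0 x -> (forall y, F0 y -> E1 y) ->
  (forall y, F0 y -> exists g, rng C g = src C x /\ y = comp C x g) ->
  A_ring C (zrng za) F ->
  ~ (forall g, rng C g = src C x -> F0 (comp C x g) -> F (comp C b g) /\ ~ F (comp C b' g)).
Proof.
  intros Hza Hzas HE1 Hb Hb' Hincl F0 F HF0 HF0x HF0E1 HF0xL HF Hsep.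
  destruct (ultrafilter_exists HF0 (ex_intro _ x HF0x)) as [W [HW HWF0]].
  destruct (Phi_separated (proj1 HW) HWF0 HF0xL Hb Hb' HF Hsep) as [HPa HnPb].
  apply HnPb, Hincl; [exact HW| | |exact HPa];
    apply (filter_up (proj1 HW) HWF0); auto; [apply A_ring_Adom; auto|].
  intros y Hy. destruct (HF0xL y Hy) as [g [Hg ->]].
  exists (comp C b g). exact (zgraph_list_comp_r Hb Hg).
Qed.

Lemma Phi_incl_factor {v} {za zb : zz C} {E1 : Mor C -> Prop} {x b b' : Mor C} :
  is_zigzag za -> zsrc za = v -> A_ring C v E1 -> E1 x ->
  zgraph za x b -> zgraph zb x b' ->
  (forall W, is_ultrafilter v W -> W E1 -> W (Adom za) ->
     forall G, Phi za W G -> Phi zb W G) ->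
  exists h, rng C h = src C b' /\ b = comp C b' h.
Proof.
  intros Hza Hzas HE1 HE1x Hb Hb' Hincl.
  pose proof (Phi_incl_not_separated Hza Hzas HE1 Hb Hb' Hincl) as Hno_sep.
  assert (Hxv : rng C x = v) by (rewrite (zgraph_dom za x b Hb); exact Hzas).
  assert (Hsb : src C x = src C b) by exact (zgraph_list_src Hb).
  assert (Hsb' : src C x = src C b') by exact (zgraph_list_src Hb').
  assert (Hrb : rng C b = zrng za) by exact (zgraph_rng za x b Hb).
  destruct (principal_zz_zigzag x) as [Zx Zxs].
  destruct (principal_zz_zigzag b) as [Zb Zbs].
  apply NNPP; intros Hnf.
  destruct (classic (rng C b' = rng C b)) as [Hr|Hr].
  - (* separate with F0 = {xg ∈ E1 : bg ∉ b'Λ} and F = bΛ \ b'Λ *)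
    destruct (principal_zz_zigzag b') as [Zb' Zb's].
    apply (Hno_sep (fun y => E1 y /\ exists g, rng C g = src C x /\ y = comp C x g /\
                        ~ exists h, rng C h = src C b' /\ comp C b g = comp C b' h)
                   (fun y => Adom (principal_zz b) y /\ ~ Adom (principal_zz b') y)).
    + apply A_ring_inter; [exact HE1|apply A_ring_not_factor; assumption].
    + split; [exact HE1x|]. exists (idm C (src C x)).
      rewrite rng_id, comp_id_r, Hsb, comp_id_r. split; [reflexivity|split; [reflexivity|]].
      intros [h Hh]. apply Hnf. exists h. exact Hh.
    + tauto.
    + intros y [_ [g [Hg [-> _]]]]. eauto.
    + apply A_ring_diff; rewrite <- Hrb; apply A_ring_Adom; congruence.
    + intros g Hg [_ [g' [Hg' [Hxg Hnh]]]].
      apply (Hlc x) in Hxg; [subst g'|congruence|congruence].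
      rewrite !Adom_principal_zz. split; [split|].
      * exists g; split; [congruence|reflexivity].
      * intros [w [Hw Hbw]]. apply Hnh. exists w; auto.
      * intros [_ Hn]. apply Hn. exists g; split; [congruence|reflexivity].
  - (* b'g and bg have different ranges: separate with F0 = E1 ∩ xΛ and F = bΛ *)
    apply (Hno_sep (fun y => E1 y /\ Adom (principal_zz x) y) (Adom (principal_zz b))).
    + apply A_ring_inter; [exact HE1|apply A_ring_Adom; congruence].
    + split; [exact HE1x|]. apply Adom_principal_zz.
      exists (idm C (src C x)). rewrite rng_id, comp_id_r. auto.
    + tauto.
    + intros y [_ Hy]. apply Adom_principal_zz in Hy. exact Hy.
    + rewrite <- Hrb. apply A_ring_Adom; auto.
    + intros g Hg _. rewrite !Adom_principal_zz. split; [exists g; split; [congruence|reflexivity]|].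
      intros [w [Hw Hbw]]. apply Hr.
      rewrite <- (rng_comp C b' g), Hbw by congruence. apply rng_comp; congruence.
Qed.

Lemma mutual_factors_eq (Hinv : no_nontrivial_invertibles C) {b b' h k : Mor C} :
  rng C h = src C b' -> b = comp C b' h -> rng C k = src C b -> b' = comp C b k -> b = b'.
Proof.
  intros Hh Hb Hk Hb'.
  assert (Hsk : src C b' = src C k) by (rewrite Hb'; apply src_comp; auto).
  assert (Hsh : src C b = src C h) by (rewrite Hb; apply src_comp; auto).
  assert (Hkh : comp C k h = idm C (src C b)).
  { apply (Hlc b); [rewrite rng_comp; congruence|rewrite rng_id; reflexivity|].
    rewrite comp_id_r, comp_assoc, <- Hb', <- Hb by congruence. reflexivity. }
  assert (Hhk : comp C h k = idm C (src C k)).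
  { apply (Hlc k); [rewrite rng_comp; congruence|rewrite rng_id; reflexivity|].
    rewrite comp_id_r, comp_assoc, Hkh, <- Hk by congruence. apply comp_id_l. }
  assert (Hk_id : k = idm C (rng C k)).
  { apply Hinv. exists h. repeat split; congruence. }
  rewrite Hb', Hk_id, Hk. symmetry. apply comp_id_r.
Qed.

Lemma sim1_sim2 (Hinv : no_nontrivial_invertibles C) {z z' : zz C} {v U v' U'} :
  in_ZX z v U -> in_ZX z' v' U' -> sim1 z v U z' v' U' -> sim2 z v U z' v' U'.
Proof.
  intros [Hz [Hzs [HU HUz]]] [Hz' [Hzs' [_ HUz']]] [[<- HUU'] [E1 [HUE1 Hagree]]].
  split; [split; auto|].
  exists (fun x => E1 x /\ Adom z x /\ Adom z' x).
  assert (HUf : is_filter v U) by apply HU.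
  split; [exact (filter_inter HUf HUE1 (filter_inter HUf HUz (proj2 (HUU' _) HUz')))|].
  intros x y [HE1x [[b Hb] [b' Hb']]].
  assert (HE1 : A_ring C v E1) by exact (filter_ring HUf HUE1).
  destruct (Phi_incl_factor Hz Hzs HE1 HE1x Hb Hb') as [h [Hh Hbh]].
  { intros W HW HWE1 HWz G. apply (proj2 (Hagree W HW HWE1)); auto. }
  destruct (Phi_incl_factor Hz' Hzs' HE1 HE1x Hb' Hb) as [k [Hk Hb'k]].
  { intros W HW HWE1 HWz' G. destruct (Hagree W HW HWE1) as [Hdom HPhi].
    apply (HPhi (proj2 Hdom HWz')). }
  pose proof (mutual_factors_eq Hinv Hh Hbh Hk Hb'k) as <-.
  split; intros Hy.
  - rewrite (zgraph_list_functional Hy Hb). exact Hb'.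
  - rewrite (zgraph_list_functional Hy Hb'). exact Hb.
Qed.

End LeftCancellative.

Section AgreeingGraphs.
Context {z z' : zz C} {E : Mor C -> Prop}.
Hypothesis Hgraph : forall x y, E x -> (zgraph z x y <-> zgraph z' x y).

Lemma filter_Adom_agree {v} {W : family C} :
  is_filter v W -> W E -> A_ring C v (Adom z') -> W (Adom z) -> W (Adom z').
Proof.
  intros HW HWE Hz' HWz. apply (filter_up HW (filter_inter HW HWz HWE) Hz').
  intros x [[y Hy] HEx]. exists y. apply Hgraph; assumption.
Qed.

Lemma Phi_incl_agree {v} {W : family C} {G} :
  is_filter v W -> W E -> zrng z = zrng z' -> Phi z W G -> Phi z' W G.
Proof.
  intros HW HWE Hrr [HG [E1 [HWE1 HE1G]]]. split; [rewrite <- Hrr; exact HG|].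
  exists (fun x => E1 x /\ E x). split; [exact (filter_inter HW HWE1 HWE)|].
  intros y [x [[HE1x HEx] [_ Hxy]]]. apply Hgraph in Hxy; [|exact HEx].
  apply HE1G. exists x. split; [exact HE1x|split; [exists y|]]; exact Hxy.
Qed.

End AgreeingGraphs.

Lemma sim2_sim1 {z z' : zz C} {v U v' U'} :
  in_ZX z v U -> in_ZX z' v' U' -> sim2 z v U z' v' U' -> sim1 z v U z' v' U'.
Proof.
  intros [Hz [Hzs _]] [Hz' [Hzs' _]] [[<- HUU'] [E [HUE Hgraph]]].
  assert (Hgraph' : forall x y, E x -> (zgraph z' x y <-> zgraph z x y))
    by (intros x y HEx; symmetry; exact (Hgraph x y HEx)).
  split; [split; auto|]. exists E. split; [exact HUE|].
  intros W [HW _] HWE.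
  split; [split; [apply (filter_Adom_agree Hgraph HW HWE)|apply (filter_Adom_agree Hgraph' HW HWE)];
          apply A_ring_Adom; auto|].
  intros HWz.
  destruct (filter_nonempty HW (filter_inter HW HWz HWE)) as [x [[y Hxy] HEx]].
  assert (Hrr : zrng z = zrng z').
  { rewrite <- (zgraph_rng z x y Hxy). apply (zgraph_rng z' x y), Hgraph; assumption. }
  intros G; split; [apply (Phi_incl_agree Hgraph HW HWE Hrr)|apply (Phi_incl_agree Hgraph' HW HWE (eq_sym Hrr))].
Qed.

End ZigzagGerms.

Theorem mainTheorem3 (C : Cat)
  (Hlc : left_cancellative C) (Hinv : no_nontrivial_invertibles C)
  (z : zz C) (v : Obj C) (U : family C)
  (z' : zz C) (v' : Obj C) (U' : family C)
  (HzU : in_ZX z v U) (HzU' : in_ZX z' v' U') :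
  sim1 z v U z' v' U' <-> sim2 z v U z' v' U'.
Proof.
  split.
  - exact (sim1_sim2 Hlc Hinv HzU HzU').
  - exact (sim2_sim1 HzU HzU').
Qed.
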